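(* Let $k$ be a field, $\Delta$ a finite connected quiver without oriented cycles, $X$ a finite length $k\Delta$-module and $M$ an endo-finite $k\Delta$-module. If $\langle\operatorname{\bold{dim}}X,\operatorname{\bold{Dim}}M\rangle>0$, then $\operatorname{Hom}(X,M)\neq 0$.
   Context: Modules are representations $(M_i,M_\alpha)$ of $\Delta$ with vertex set $\Delta_0$, arrow set $\Delta_1$, arrows $\alpha\colon s(\alpha)\to t(\alpha)$. $E(M)=\operatorname{End}(M)^{\mathrm{op}}$; $M$ is endo-finite if it has finite length as an $E(M)$-module. $\operatorname{\bold{dim}}X\in\mathbb Z^{\Delta_0}$ has $i$-th entry $\dim_kX_i$, and $(\operatorname{\bold{Dim}}M)_i$ is the length of $M_i$ as an $E(M)$-module. The Euler form is $\langle x,y\rangle=\sum_{i\in\Delta_0}x_iy_i-\sum_{\alpha\in\Delta_1}x_{s(\alpha)}y_{t(\alpha)}$. *)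

From HB Require Import structures.
From mathcomp Require Import all_boot all_order all_algebra.
Set Implicit Arguments. Unset Strict Implicit. Unset Printing Implicit Defensive.
Import Order.TTheory GRing.Theory Num.Theory.
Local Open Scope ring_scope.

Section Quiver.
Variables (n : nat) (Q1 : finType) (s t : Q1 -> 'I_n).

Definition arrow_rel : rel 'I_n := fun i j => [exists a : Q1, (s a == i) && (t a == j)].

Definition undir_rel : rel 'I_n := fun i j => arrow_rel i j || arrow_rel j i.

Definition quiver_connected : Prop :=
  (0 < n)%N /\ forall i j : 'I_n, connect undir_rel i j.

(* no oriented cycles (including loops) *)
Definition quiver_acyclic : Prop :=
  forall i j : 'I_n, arrow_rel i j -> ~~ connect arrow_rel j i.

Definition euler_form (x y : 'I_n -> nat) : int :=
  (\sum_(i < n) ((x i * y i)%N)%:Z - \sum_(a : Q1) ((x (s a) * y (t a))%N)%:Z)%R.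

End Quiver.


(* A representation of the quiver (k-spaces V i, possibly infinite dimensional,
   and k-linear maps along arrows) *)
Definition rep_maps (k : fieldType) (n : nat) (Q1 : finType) (s t : Q1 -> 'I_n)
  (V : 'I_n -> lmodType k) : Type :=
  forall a : Q1, {linear V (s a) -> V (t a)}.

Definition is_rep_hom (k : fieldType) (n : nat) (Q1 : finType) (s t : Q1 -> 'I_n)
  (V W : 'I_n -> lmodType k) (MV : rep_maps s t V) (MW : rep_maps s t W)
  (g : forall i, {linear V i -> W i}) : Prop :=
  forall (a : Q1) (x : V (s a)), g (t a) (MV a x) = MW a (g (s a) x).

(* Endomorphisms of M = elements of End(M) (E(M) is its opposite ring) *)
Definition is_endo (k : fieldType) (n : nat) (Q1 : finType) (s t : Q1 -> 'I_n)
  (V : 'I_n -> lmodType k) (M : rep_maps s t V)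
  (f : forall i, {linear V i -> V i}) : Prop := is_rep_hom M M f.

Definition has_chain (T : Type) (sub : (T -> Prop) -> Prop) (m : nat) : Prop :=
  exists U : nat -> T -> Prop,
    (forall j, (j <= m)%N -> sub (U j)) /\
    (forall j, (j < m)%N -> (forall x, U j x -> U j.+1 x) /\ exists x, U j.+1 x /\ ~ U j x).

Definition finite_length (T : Type) (sub : (T -> Prop) -> Prop) : Prop :=
  exists N : nat, forall m, has_chain sub m -> (m <= N)%N.

Definition length_is (T : Type) (sub : (T -> Prop) -> Prop) (l : nat) : Prop :=
  has_chain sub l /\ forall m, has_chain sub m -> (m <= l)%N.

Definition EM_sub_at (k : fieldType) (n : nat) (Q1 : finType) (s t : Q1 -> 'I_n)
  (V : 'I_n -> lmodType k) (M : rep_maps s t V) (i : 'I_n) (U : V i -> Prop) : Prop :=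
  U 0 /\ (forall x y, U x -> U y -> U (x + y)) /\ (forall x, U x -> U (- x)) /\
  (forall f, is_endo M f -> forall x, U x -> U (f i x)).

(* E(M)-submodules of the whole module M = (+)_i M_i (finite product) *)
Definition EM_sub (k : fieldType) (n : nat) (Q1 : finType) (s t : Q1 -> 'I_n)
  (V : 'I_n -> lmodType k) (M : rep_maps s t V) (U : (forall i, V i) -> Prop) : Prop :=
  U (fun i => 0) /\ (forall x y, U x -> U y -> U (fun i => x i + y i)) /\
  (forall x, U x -> U (fun i => - x i)) /\
  (forall f, is_endo M f -> forall x, U x -> U (fun i => f i (x i))).

Definition endo_finite (k : fieldType) (n : nat) (Q1 : finType) (s t : Q1 -> 'I_n)
  (V : 'I_n -> lmodType k) (M : rep_maps s t V) : Prop :=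
  finite_length (EM_sub M).

Arguments EM_sub_at {k n Q1 s t V} M i U.

From HB Require Import structures.
From mathcomp Require Import all_boot all_order all_algebra.
From mathcomp Require Import boolp.
Import Order.TTheory GRing.Theory Num.Theory.
Local Open Scope ring_scope.
Set Implicit Arguments. Unset Strict Implicit.

(* If Hom(X, M) = 0, the map sending a family (f_i : X_i -> M_i)_i to
   (M_a f_(s a) - f_(t a) X_a)_a is injective.  In coordinates it goes from
   (+)_i M_i^(dim X_i) to (+)_a M_(t a)^(dim X_(s a)) and commutes with the diagonal
   action of End(M), so comparing E(M)-lengths, which are additive on finite direct
   sums, gives sum_i dim X_i * Dim M_i <= sum_a dim X_(s a) * Dim M_(t a), that is
   <dim X, Dim M> <= 0. *)

Section SubmoduleLength.
Variables (W : zmodType) (E : Type) (act : E -> W -> W).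

Record submod (U : W -> Prop) : Prop := Submod {
  submod0 : U 0;
  submodD : forall x y, U x -> U y -> U (x + y);
  submodN : forall x, U x -> U (- x);
  submodA : forall e x, U x -> U (act e x) }.

Definition chain (C : W -> Prop) (m : nat) (U : nat -> W -> Prop) : Prop :=
  (forall j, (j <= m)%N -> submod (U j) /\ forall x, U j x -> C x) /\
  (forall j, (j < m)%N -> (forall x, U j x -> U j.+1 x) /\ exists x, U j.+1 x /\ ~ U j x).

Definition length_ge (C : W -> Prop) (m : nat) : Prop := exists U, chain C m U.

Definition length_le (C : W -> Prop) (N : nat) : Prop :=
  forall m, length_ge C m -> (m <= N)%N.

Definition subsum (A B : W -> Prop) (x : W) : Prop := exists a b, A a /\ B b /\ x = a + b.

Lemma length_ge_sub C C' m : (forall x, C x -> C' x) -> length_ge C m -> length_ge C' m.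
Proof.
by move=> CC' [U [HU incU]]; exists U; split=> // j /HU [? ?]; split; auto.
Qed.

Lemma length_le_sub C C' N : (forall x, C x -> C' x) -> length_le C' N -> length_le C N.
Proof. by move=> CC' leC' m /(length_ge_sub CC'); apply: leC'. Qed.

Lemma submodI A B : submod A -> submod B -> submod (fun x => A x /\ B x).
Proof.
case=> A0 AD AN AA [B0 BD BN BA].
by split=> // [x y [? ?] [? ?]|x [? ?]|e x [? ?]]; split; auto.
Qed.

Hypothesis actD : forall e x y, act e (x + y) = act e x + act e y.

Lemma act0 e : act e 0 = 0.
Proof. by apply: (addrI (act e 0)); rewrite addr0 -actD addr0. Qed.

Lemma submod_subsum A B : submod A -> submod B -> submod (subsum A B).
Proof.
case=> A0 AD AN AA [B0 BD BN BA]; split.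
- by exists 0, 0; rewrite addr0.
- move=> _ _ [a [b [Ha [Hb ->]]]] [a' [b' [Ha' [Hb' ->]]]].
  by exists (a + a'), (b + b'); rewrite addrACA; auto.
- by move=> _ [a [b [Ha [Hb ->]]]]; exists (- a), (- b); rewrite opprD; auto.
- by move=> e _ [a [b [Ha [Hb ->]]]]; exists (act e a), (act e b); rewrite actD; auto.
Qed.

(* [f] flags steps known to be strict; only those are kept, and the extracted chain ends at
   [P m] so that the induction goes through. *)
Lemma chain_of_increasing C (P : nat -> W -> Prop) (f : nat -> bool) m :
  (forall j, (j <= m)%N -> submod (P j) /\ forall x, P j x -> C x) ->
  (forall j, (j < m)%N -> forall x, P j x -> P j.+1 x) ->
  (forall j, (j < m)%N -> f j -> exists x, P j.+1 x /\ ~ P j x) ->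
  exists U, U (\sum_(j < m) (f j : nat))%N = P m /\ chain C (\sum_(j < m) (f j : nat))%N U.
Proof.
elim: m => [|m IH] HP incP strP.
  exists (fun _ => P 0%N); rewrite big_ord0; split=> //; split=> // j _.
  exact: HP.
have [U [Ul [HU incU]]] := IH (fun j Hj => HP j (leqW Hj))
  (fun j Hj => incP j (ltnW Hj)) (fun j Hj => strP j (ltnW Hj)).
rewrite big_ord_recr /=; set l := (\sum_(j < m) (f j : nat))%N in Ul HU incU *.
case Hf: (f m).
- exists (fun j => if (j <= l)%N then U j else P m.+1); rewrite addn1 ltnn.
  split=> //; split=> [j Hj|j]; first by case: ifP => Hjl; [apply: HU | apply: HP].
  rewrite ltnS => Hjl; rewrite Hjl; case: ifP => [/incU //|Hjl'].
  have -> : j = l by apply/eqP; rewrite eqn_leq Hjl leqNgt Hjl'.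
  by rewrite Ul; split; [apply: incP | apply: strP].
- exists (fun j => if (j < l)%N then U j else P m.+1); rewrite addn0 ltnn.
  split=> //; split=> [j Hj|j Hj]; first by case: ifP => Hjl; [apply: HU (ltnW Hjl) | apply: HP].
  rewrite Hj; case: ifP => [Hjl|Hjl]; first exact: incU.
  have Ej : j.+1 = l by apply/eqP; rewrite eqn_leq Hj leqNgt Hjl.
  have [incj [x [Hx Hnx]]] := incU j Hj; rewrite Ej Ul in incj Hx.
  split; first by move=> y /incj; apply: incP.
  by exists x; split=> //; apply: incP.
Qed.

(* With [P j := U j ∩ A] and [Q j := (U j + A) ∩ B], a step of the chain [U] that is
   strict in [C ⊆ A + B] is strict in [P] or in [Q] (modular law). *)
Lemma length_le_subsum A B C na nb : submod A -> submod B ->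
  (forall x, C x -> subsum A B x) ->
  length_le A na -> length_le B nb -> length_le C (na + nb).
Proof.
move=> sA sB CAB leA leB m [U [HU incU]].
pose P j x := U j x /\ A x.
pose Q j x := B x /\ subsum (U j) A x.
pose f j := `[< exists x, P j.+1 x /\ ~ P j x >].
have HP j : (j <= m)%N -> submod (P j) /\ forall x, P j x -> A x.
  by move=> /HU [sU _]; split; [apply: submodI | move=> x []].
have HQ j : (j <= m)%N -> submod (Q j) /\ forall x, Q j x -> B x.
  by move=> /HU [sU _]; split; [apply/submodI/submod_subsum | move=> x []].
have incP j : (j < m)%N -> forall x, P j x -> P j.+1 x.
  by move=> /incU [incj _] x [Ux Ax]; split; first exact: incj.
have incQ j : (j < m)%N -> forall x, Q j x -> Q j.+1 x.
  move=> /incU [incj _] x [Bx [u [a [Uu [Aa Ex]]]]].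
  by split=> //; exists u, a; split; first exact: incj.
have strP j : (j < m)%N -> f j -> exists x, P j.+1 x /\ ~ P j x by move=> _ /asboolP.
have strQ j : (j < m)%N -> ~~ f j -> exists x, Q j.+1 x /\ ~ Q j x.
  move=> jm /asboolPn Pconst; apply: contrapT => Qconst.
  have [incj [x [Ux Unx]]] := incU j jm; apply: Unx.
  have [sUj _] := HU j (ltnW jm); have [sUj1 Cj1] := HU j.+1 jm.
  have [a [b [Aa [Bb Ex]]]] := CAB x (Cj1 x Ux).
  have Qb : Q j.+1 b.
    split=> //; exists x, (- a); split=> //; split; first exact: submodN.
    by rewrite Ex addrAC subrr add0r.
  have [_ [u [a' [Uu [Aa' Eb]]]]] : B b /\ subsum (U j) A b.
    by apply: contrapT => Qnb; apply: Qconst; exists b.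
  have Pxu : P j.+1 (x - u).
    split; first by apply: submodD (submodN _ (incj u Uu)).
    have -> : x - u = a + a' by rewrite Ex Eb addrCA addrAC subrr add0r.
    exact: submodD.
  have [Uxu _] : U j (x - u) /\ A (x - u).
    by apply: contrapT => Pnxu; apply: Pconst; exists (x - u).
  by rewrite -(subrK u x); apply: submodD.
have [UP [_ chainP]] := chain_of_increasing HP incP strP.
have [UQ [_ chainQ]] := chain_of_increasing HQ incQ strQ.
have -> : m = (\sum_(j < m) (f j : nat) + \sum_(j < m) (~~ f j : nat))%N.
  rewrite -big_split /= -[m in LHS]card_ord -sum1_card.
  by apply: eq_bigr => j _; case: (f j).
by apply: leq_add; [apply: leA | apply: leB]; eexists; eassumption.
Qed.

(* A chain of [A] followed by [UA na + UB j] along a chain [UB] of [B]; strictness of the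
   second half uses [A ∩ B = 0]. *)
Lemma length_ge_subsum A B C na nb : submod A -> submod B ->
  (forall x, A x -> B x -> x = 0) -> (forall x, subsum A B x -> C x) ->
  length_ge A na -> length_ge B nb -> length_ge C (na + nb).
Proof.
move=> sA sB AB0 ABC [UA [HA incA]] [UB [HB incB]].
have [sUA UA_A] := HA na (leqnn na).
exists (fun j => if (j < na)%N then UA j else subsum (UA na) (UB (j - na)%N)); split.
  move=> j Hj; case: ifP => jna.
    have [sUj UAj] := HA j (ltnW jna); split=> // x /UAj Ax.
    by apply: ABC; exists x, 0; rewrite addr0; split=> //; split; first exact: submod0.
  have [sUBj UBj] := HB (j - na)%N ltac:(by rewrite leq_subLR).
  split; first exact: submod_subsum.
  by move=> _ [a [b [Ha [Hb ->]]]]; apply: ABC; exists a, b; auto.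
move=> j Hj; case: (ltnP j.+1 na) => [j1na|naj1].
  by rewrite (ltnW j1na); exact: incA (ltnW j1na).
have [sUB0 _] := HB 0%N (leq0n _).
case: (ltnP j na) => [jna|naj].
  have Ej : na = j.+1 by apply/eqP; rewrite eqn_leq jna naj1.
  have [incj [x [Ux Unx]]] := incA j jna; rewrite -Ej in incj Ux.
  rewrite -Ej subnn; split.
    by move=> y Uy; exists y, 0; rewrite addr0; split; [exact: incj | split; first exact: submod0].
  by exists x; split=> //; exists x, 0; rewrite addr0; split=> //; split; first exact: submod0.
have jnb : (j - na < nb)%N by rewrite ltn_subLR.
rewrite subSn //.
have [incj [y [Uy Uny]]] := incB _ jnb.
have [_ UBj] := HB _ (ltnW jnb); have [_ UBj1] := HB _ jnb.
split.
  by move=> _ [a [b [Ha [Hb ->]]]]; exists a, b; split=> //; split; first exact: incj.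
exists y; split; first by exists 0, y; rewrite add0r; split; first exact: submod0.
move=> [a [b [Ha [Hb Ey]]]]; apply: Uny.
have Ba : B a.
  rewrite (_ : a = y - b); last by rewrite Ey addrK.
  by apply: (submodD sB); [exact: UBj1 | exact/(submodN sB)/UBj].
by rewrite Ey (AB0 a (UA_A a Ha) Ba) add0r.
Qed.

End SubmoduleLength.

Section InjectiveTransfer.
Variables (W1 W2 : zmodType) (E : Type) (act1 : E -> W1 -> W1) (act2 : E -> W2 -> W2).
Variables (g : W1 -> W2) (C1 : W1 -> Prop) (C2 : W2 -> Prop).
Hypotheses (gD : {morph g : x y / x + y}) (gA : forall e x, g (act1 e x) = act2 e (g x)).
Hypotheses (g_inj : forall x y, C1 x -> C1 y -> g x = g y -> x = y)
  (gC : forall x, C1 x -> C2 (g x)).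

Lemma length_ge_inj m : length_ge act1 C1 m -> length_ge act2 C2 m.
Proof.
move=> [U [HU incU]].
have g0 : g 0 = 0 by apply: (addrI (g 0)); rewrite -gD !addr0.
have gN x : g (- x) = - g x by apply: (addrI (g x)); rewrite -gD !subrr.
exists (fun j y => exists2 x, U j x & g x = y); split.
  move=> j /HU [[U0 UD UN UA] UC]; split; last by move=> _ [x /UC Cx <-]; apply: gC.
  split; first by exists 0.
  - by move=> _ _ [x Ux <-] [y Uy <-]; exists (x + y); auto.
  - by move=> _ [x Ux <-]; exists (- x); auto.
  - by move=> e _ [x Ux <-]; exists (act1 e x); auto.
move=> j jm; have [incj [x [Ux Unx]]] := incU j jm; split.
  by move=> _ [y Uy <-]; exists y; auto.
exists (g x); split; first by exists x.
move=> [y Uy gxy]; apply: Unx; rewrite -(g_inj _ _ gxy) //.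
- exact: (HU j (ltnW jm)).2 y Uy.
- exact: (HU j.+1 jm).2 x Ux.
Qed.

Lemma length_le_inj N : length_le act2 C2 N -> length_le act1 C1 N.
Proof. by move=> le2 m /length_ge_inj; apply: le2. Qed.

End InjectiveTransfer.

Section DependentProduct.
Variables (P : Type) (F : P -> zmodType).

Definition dprod := forall p, F p.
HB.instance Definition _ := Choice.on dprod.

Definition dprod_add (x y : dprod) : dprod := fun p => x p + y p.
Definition dprod_opp (x : dprod) : dprod := fun p => - x p.

Lemma dprod_addA : associative dprod_add.
Proof. by move=> x y z; apply: functional_extensionality_dep => p; apply: addrA. Qed.
Lemma dprod_addC : commutative dprod_add.
Proof. by move=> x y; apply: functional_extensionality_dep => p; apply: addrC. Qed.
Lemma dprod_add0 : left_id (fun p => 0) dprod_add.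
Proof. by move=> x; apply: functional_extensionality_dep => p; apply: add0r. Qed.
Lemma dprod_addN : left_inverse (fun p => 0) dprod_opp dprod_add.
Proof. by move=> x; apply: functional_extensionality_dep => p; apply: addNr. Qed.

HB.instance Definition _ :=
  GRing.isZmodule.Build dprod dprod_addA dprod_addC dprod_add0 dprod_addN.

Lemma dprodD (x y : dprod) p : (x + y) p = x p + y p. Proof. by []. Qed.
Lemma dprodN (x : dprod) p : (- x) p = - x p. Proof. by []. Qed.

End DependentProduct.

(* The index [p] in [act p] must stay explicit. *)
Unset Implicit Arguments.

Section FiniteProductLength.
Variables (P : finType) (F : P -> zmodType) (E : Type) (act : forall p, E -> F p -> F p).
Variable D : P -> nat.
Hypothesis actD : forall p e x y, act p e (x + y) = act p e x + act p e y.
Hypotheses (length_ge_D : forall p, length_ge (act p) (fun _ => True) (D p))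
  (length_le_D : forall p, length_le (act p) (fun _ => True) (D p)).

Definition dact e (w : dprod F) : dprod F := fun p => act p e (w p).

Lemma dactD e : {morph dact e : x y / x + y}.
Proof. by move=> x y; apply: functional_extensionality_dep => p; apply: actD. Qed.

Definition supported (r : seq P) (w : dprod F) : Prop := forall q, q \notin r -> w q = 0.

Lemma submod_supported r : submod dact (supported r).
Proof.
split=> // [x y Hx Hy q qr|x Hx q qr|e x Hx q qr].
- by rewrite dprodD Hx ?Hy ?addr0.
- by rewrite dprodN Hx ?oppr0.
- by rewrite /dact Hx // (act0 (actD q)).
Qed.

Definition single (p : P) (v : F p) : dprod F :=
  fun q => if p =P q is ReflectT e then eq_rect p F v q e else 0.

Lemma single_id p v : single p v p = v.
Proof. by rewrite /single; case: eqP => // e; rewrite (eq_irrelevance e (erefl p)). Qed.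

Lemma single_ne p v q : q != p -> single p v q = 0.
Proof. by move=> qp; rewrite /single; case: eqP => // e; case/negP: qp; rewrite e. Qed.

Lemma singleD p : {morph single p : x y / x + y}.
Proof.
move=> x y; apply: functional_extensionality_dep => q; rewrite dprodD /single.
by case: eqP => [e|_]; [destruct e | rewrite addr0].
Qed.

Lemma single_act p e v : single p (act p e v) = dact e (single p v).
Proof.
apply: functional_extensionality_dep => q; rewrite /dact /single.
by case: eqP => [e'|_]; [destruct e' | rewrite (act0 (actD q))].
Qed.

Lemma length_supported1 p :
  length_ge dact (supported [:: p]) (D p) /\ length_le dact (supported [:: p]) (D p).
Proof.
have supp_single v : supported [:: p] (single p v).
  by move=> q; rewrite inE => /single_ne ->.
split.
  apply: (length_ge_inj (singleD p) (single_act p) _ (fun v _ => supp_single v)).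
    by move=> x y _ _ Exy; rewrite -(single_id p x) Exy single_id.
  exact: length_ge_D.
apply: (length_le_inj (g := fun w : dprod F => w p) _ _ _ (fun _ _ => I)) => //.
move=> x y Hx Hy Exy; apply: functional_extensionality_dep => q.
by case: (eqVneq q p) => [->|qp] //; rewrite Hx ?Hy // inE.
Qed.

Lemma length_supported r : uniq r ->
  length_ge dact (supported r) (\sum_(p <- r) D p) /\
  length_le dact (supported r) (\sum_(p <- r) D p).
Proof.
elim: r => [_|p r IH /= /andP [pr /IH [ge_r le_r]]].
  rewrite big_nil; split.
    by exists (fun _ => supported [::]); split=> // j _; split=> //; apply: submod_supported.
  move=> [|m] // [U [HU /(_ 0%N isT) [_ [x [Ux Unx]]]]].
  have x0 : x = 0 by apply: functional_extensionality_dep => q; apply: (HU 1%N isT).2.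
  by case: Unx; rewrite x0; case: (HU 0%N isT) => [[]].
have [ge_p le_p] := length_supported1 p.
have supp_disj x : supported [:: p] x -> supported r x -> x = 0.
  move=> Hp Hr; apply: functional_extensionality_dep => q.
  have [qr|qr] := boolP (q \in r); last exact: Hr.
  by apply: Hp; rewrite inE; apply: contraNneq pr => <-.
rewrite big_cons; split.
  apply: (length_ge_subsum dactD (submod_supported _) (submod_supported _) supp_disj) ge_p ge_r.
  move=> _ [a [b [Ha [Hb ->]]]] q; rewrite inE negb_or => /andP [qp qr].
  by rewrite dprodD Ha ?Hb ?addr0 // inE.
apply: (length_le_subsum dactD (submod_supported _) (submod_supported _)) le_p le_r.
move=> x Hx; exists (single p (x p)), (x - single p (x p)).
split; first by move=> q; rewrite inE => /single_ne ->.
split; last by rewrite addrC subrK.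
move=> q qr; rewrite dprodD dprodN.
have [->|qp] := eqVneq q p; first by rewrite single_id subrr.
by rewrite single_ne // Hx ?subr0 // inE negb_or qp.
Qed.

Lemma length_dprod :
  length_ge dact (fun _ => True) (\sum_p D p) /\ length_le dact (fun _ => True) (\sum_p D p).
Proof.
have [ge_all le_all] := length_supported _ (enum_uniq P).
rewrite big_enum in ge_all le_all; split.
  exact: length_ge_sub ge_all.
by apply: length_le_sub le_all => x _ q; rewrite mem_enum.
Qed.

End FiniteProductLength.

Section EndomorphismAction.
Variables (k : fieldType) (n : nat) (Q1 : finType) (s t : Q1 -> 'I_n).
Variables (V : 'I_n -> lmodType k) (M : rep_maps s t V).

Definition endo := {f : forall i, {linear V i -> V i} | is_endo M f}.

Definition endo_act (i : 'I_n) (e : endo) (x : V i) : V i := sval e i x.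

Lemma endo_actD i e : {morph endo_act i e : x y / x + y}.
Proof. exact: raddfD. Qed.

Lemma submod_endo_actP i U : submod (endo_act i) U <-> EM_sub_at M i U.
Proof.
split=> [[U0 UD UN UA]|[U0 [UD [UN UA]]]].
  by do ![split=> //] => f Hf; apply: (UA (exist _ f Hf)).
by split=> // -[f Hf]; apply: UA.
Qed.

Lemma length_endo_act i l : length_is (EM_sub_at M i) l ->
  length_ge (endo_act i) (fun _ => True) l /\ length_le (endo_act i) (fun _ => True) l.
Proof.
move=> [[U [HU incU]] maxl]; split.
  by exists U; split=> // j /HU /submod_endo_actP.
move=> m [U' [HU' incU']]; apply: maxl; exists U'; split=> // j /HU' [].
by move=> /submod_endo_actP.
Qed.

End EndomorphismAction.

Arguments endo {k n Q1 s t V} M.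
Arguments endo_act {k n Q1 s t V M} i e x.
Arguments endo_actD {k n Q1 s t V} M i e.
Arguments length_endo_act {k n Q1 s t V M i l}.

Lemma sum_tag (I : finType) (J : I -> finType) (F : I -> nat) :
  (\sum_(p : {i : I & J i}) F (tag p) = \sum_i #|J i| * F i)%N.
Proof.
rewrite -(sig_big_dep (J := J) predT (fun _ => predT) (fun i _ => F i)) /=.
by apply: eq_bigr => i _; rewrite sum_nat_const mulnC.
Qed.

Lemma euler_form_gt0 n (Q1 : finType) (s t : Q1 -> 'I_n) (x y : 'I_n -> nat) :
  (0 < euler_form s t x y) = (\sum_a x (s a) * y (t a) < \sum_i x i * y i)%N.
Proof.
have sumZ (I : finType) (F : I -> nat) : \sum_i (F i)%:Z = (\sum_i F i)%N%:Z :> int.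
  by rewrite (big_morph Posz PoszD (erefl _)).
by rewrite /euler_form !sumZ subr_gt0 ltz_nat.
Qed.

Section HomEquations.
Variables (k : fieldType) (n : nat) (Q1 : finType) (s t : Q1 -> 'I_n).
Variables (d : 'I_n -> nat) (X : rep_maps s t (fun i => 'rV[k]_(d i))).
Variables (V : 'I_n -> lmodType k) (M : rep_maps s t V).

Definition vertex_basis := {i : 'I_n & 'I_(d i)}.
Definition arrow_basis := {a : Q1 & 'I_(d (s a))}.

Definition vertex_homs := dprod (fun p : vertex_basis => V (tag p) : zmodType).
Definition arrow_homs := dprod (fun q : arrow_basis => V (t (tag q)) : zmodType).

Definition hom_of (w : vertex_homs) (i : 'I_n) (x : 'rV[k]_(d i)) : V i :=
  \sum_(j < d i) x 0 j *: (w (existT _ i j) : V i).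

Lemma hom_of_is_linear w i : linear (hom_of w i).
Proof.
move=> a u v; rewrite /hom_of scaler_sumr -big_split /=; apply: eq_bigr => j _.
by rewrite !mxE scalerDl scalerA.
Qed.

HB.instance Definition _ w i :=
  GRing.isLinear.Build k _ _ _ (hom_of w i) (hom_of_is_linear w i).

Lemma hom_of_delta w i (j : 'I_(d i)) : hom_of w i (delta_mx 0 j) = w (existT _ i j).
Proof.
rewrite /hom_of (bigD1 j) //= mxE !eqxx scale1r big1 ?addr0 // => j' j'j.
by rewrite mxE (negbTE j'j) andbF scale0r.
Qed.

Lemma hom_ofD w w' i x : hom_of (w + w') i x = hom_of w i x + hom_of w' i x.
Proof. by rewrite /hom_of -big_split; apply: eq_bigr => j _; rewrite dprodD scalerDr. Qed.

(* In coordinates this is the map (f_i)_i |-> (M_a f_(s a) - f_(t a) X_a)_a,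
   whose kernel is Hom(X, M). *)
Definition hom_defect (w : vertex_homs) : arrow_homs := fun q =>
  M (tag q) (w (existT _ (s (tag q)) (tagged q)))
  - hom_of w (t (tag q)) (X (tag q) (delta_mx 0 (tagged q))).

Lemma hom_defectD : {morph hom_defect : w w' / w + w'}.
Proof.
move=> w w'; apply: functional_extensionality_dep => q.
by rewrite dprodD /hom_defect dprodD raddfD hom_ofD opprD addrACA.
Qed.

Definition vertex_homs_act (e : endo M) (w : vertex_homs) : vertex_homs :=
  dact _ _ (endo M) (fun p : vertex_basis => endo_act (tag p)) e w.
Definition arrow_homs_act (e : endo M) (w : arrow_homs) : arrow_homs :=
  dact _ _ (endo M) (fun q : arrow_basis => endo_act (t (tag q))) e w.

Lemma hom_defect_act e w : hom_defect (vertex_homs_act e w) = arrow_homs_act e (hom_defect w).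
Proof.
apply: functional_extensionality_dep => q; case: e => f Hf.
rewrite /hom_defect /arrow_homs_act /vertex_homs_act /dact /endo_act /= raddfB /= Hf.
rewrite /hom_of (linear_sum (f (t (tag q)))); congr (_ - _).
by apply: eq_bigr => j _; rewrite linearZ.
Qed.

Lemma hom_defect_eq0 w : hom_defect w = 0 -> is_rep_hom X M (fun i => hom_of w i).
Proof.
move=> w0 a x /=.
have Mw j : M a (w (existT _ (s a) j)) = hom_of w (t a) (X a (delta_mx 0 j)).
  by apply/eqP; rewrite -subr_eq0; apply/eqP; have := congr1 (fun u => u (existT _ a j)) w0.
rewrite {1}(row_sum_delta x) !linear_sum /=.
by apply: eq_bigr => j _; rewrite !linearZ /= Mw.
Qed.

Lemma hom_defect_inj :
  (forall g, is_rep_hom X M g -> forall i x, g i x = 0) -> injective hom_defect.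
Proof.
move=> homs0 w w' ww'; apply/eqP; rewrite -subr_eq0; apply/eqP.
have defect0 : hom_defect 0 = 0.
  by apply: (addrI (hom_defect 0)); rewrite -hom_defectD !addr0.
have /homs0 hom0 : is_rep_hom X M (fun i => hom_of (w - w') i).
  by apply: hom_defect_eq0; rewrite hom_defectD ww' -hom_defectD subrr defect0.
by apply: functional_extensionality_dep => -[i j]; rewrite -hom_of_delta hom0.
Qed.

Lemma hom_defect_length (D : 'I_n -> nat) :
  (forall i, length_is (EM_sub_at M i) (D i)) -> injective hom_defect ->
  (\sum_i d i * D i <= \sum_a d (s a) * D (t a))%N.
Proof.
move=> lenD inj_defect.
have lenV i := length_endo_act (lenD i).
have [geV _] := length_dprod _ _ _ _ (fun p : vertex_basis => D (tag p))
  (fun p => endo_actD M (tag p)) (fun p => (lenV (tag p)).1) (fun p => (lenV (tag p)).2).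
have [_ leA] := length_dprod _ _ _ _ (fun q : arrow_basis => D (t (tag q)))
  (fun q => endo_actD M (t (tag q))) (fun q => (lenV (t (tag q))).1)
  (fun q => (lenV (t (tag q))).2).
have := leA _ (length_ge_inj hom_defectD hom_defect_act (fun w w' _ _ => @inj_defect w w')
  (fun _ _ => I) geV).
rewrite (sum_tag _ (fun i => 'I_(d i)) D) (sum_tag _ (fun a => 'I_(d (s a))) (fun a => D (t a))).
by under eq_bigr do rewrite card_ord; under [in X in (_ <= X)%N]eq_bigr do rewrite card_ord.
Qed.

End HomEquations.

Theorem lemma8 (k : fieldType) (n : nat) (Q1 : finType) (s t : Q1 -> 'I_n)
  (d : 'I_n -> nat) (X : rep_maps s t (fun i => 'rV[k]_(d i)))
  (V : 'I_n -> lmodType k) (M : rep_maps s t V) (D : 'I_n -> nat) :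
  quiver_connected s t -> quiver_acyclic s t ->
  endo_finite M ->
  (forall i, length_is (EM_sub_at M i) (D i)) ->
  (0 < euler_form s t d D)%R ->
  exists g : forall i, {linear 'rV[k]_(d i) -> V i},
    is_rep_hom X M g /\ exists (i : 'I_n) (x : 'rV[k]_(d i)), g i x != 0.
Proof.
move=> _ _ _ lenD; rewrite euler_form_gt0 ltnNge => /negP; apply: contra_notP => no_hom.
apply: hom_defect_length lenD _; apply: hom_defect_inj => g g_hom i x.
by apply/eqP; apply: contra_notT no_hom => gx; exists g; split=> //; exists i, x.
Qed.
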